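(* Let $n\geq 2L(3,1)$ and let $\mathcal{F},\mathcal{G}\subseteq\Pi(n,3)$ be non-trivial cross $1$-intersecting families maximizing $|\mathcal{F}||\mathcal{G}|$ (among all such pairs). If $|\mathcal{F}|\leq|\mathcal{G}|$, then $\mathcal{F}=\mathcal{A}(3,\{A\},M)$ and $\mathcal{G}=\mathcal{B}(3,\{A\},M)$ for some singleton $A$ and some $3$-partition $M$ (of a subset of $[n]$) with $A\in M$ and $|\cup M|<n$.
   Context: $[n]=\{1,\ldots,n\}$. A partition is a set of pairwise disjoint nonempty sets (blocks); $\cup P$ is the union of its blocks. $\Pi(n,k)$ is the set of partitions of $[n]$ into $k$ blocks. $F\cap G$ is the set of common blocks. $L(k,t):=(t+1)+(k-t+1)\log_2((t+1)(k-t+1))$, so $L(3,1)=2+3\log_2 6$. $\mathcal{F},\mathcal{G}$ are cross $1$-intersecting if $|F\cap G|\geq1$ for all $F\in\mathcal{F},G\in\mathcal{G}$; non-trivial if no block belongs to every member of $\mathcal{F}\cup\mathcal{G}$. For an $\ell$-partition $M$ and $X\subseteq M$ with $|X|=t$, $\overline{\cup M}=[n]\setminus\cup M$, $\mathcal{A}(k,X,M)=\{F\in\Pi(n,k):X\subseteq F,\ F\cap(M\setminus X)\neq\emptyset\}$ and $\mathcal{B}(\ell,X,M)=\{F\in\Pi(n,\ell):X\subseteq F\}\cup\{(M\setminus\{B\})\cup\{B\cup\overline{\cup M}\}:B\in X\}$. *)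

From Stdlib Require Import Reals.
From mathcomp Require Import all_boot.
Set Implicit Arguments. Unset Strict Implicit. Unset Printing Implicit Defensive.

(* The ground set [n] = {1,...,n} is represented by 'I_n = {0,...,n-1}. *)

Definition Lkt (k t : nat) : R :=
  Rplus (INR (t + 1))
        (Rmult (INR (k - t + 1))
               (Rdiv (ln (INR ((t + 1) * (k - t + 1)))) (ln (INR 2)))).

Definition is_partial_partition (n : nat) (P : {set {set 'I_n}}) : bool :=
  trivIset P && (set0 \notin P).

Definition Pi (n k : nat) : {set {set {set 'I_n}}} :=
  [set P : {set {set 'I_n}} | partition P [set: 'I_n] & #|P| == k].

Definition cross1 (n : nat) (calF calG : {set {set {set 'I_n}}}) : Prop :=
  forall F G, F \in calF -> G \in calG -> 1 <= #|F :&: G|.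

Definition nontrivial (n : nat) (calF calG : {set {set {set 'I_n}}}) : Prop :=
  ~ exists B : {set 'I_n}, forall P, P \in calF :|: calG -> B \in P.

Definition calA (n k : nat) (X M : {set {set 'I_n}}) : {set {set {set 'I_n}}} :=
  [set F in Pi n k | (X \subset F) && (F :&: (M :\: X) != set0)].

Definition calB (n l : nat) (X M : {set {set 'I_n}}) : {set {set {set 'I_n}}} :=
  [set F in Pi n l | X \subset F] :|:
  [set (M :\ B) :|: [set B :|: ~: cover M] | B in X].

From Stdlib Require Import Reals Lra.
From mathcomp Require Import all_boot zify.

(* A 3-partition is determined by any two of its blocks, and the partitions having a given
   block [C] (the star of [C]) number at most [2 ^ (n - |C| - 1) - 1].  The claimed
   extremal pair, with singleton blocks, has product at least [2 ^ (n - 1)], so an extremal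
   pair does too.  Then [F] has two members [F1], [F2]: otherwise [G] lies in the three
   stars of the blocks of the single member, which are too small.  Every member of [G]
   avoiding the common blocks of [F1] and [F2] is determined by a block of each, so there
   are at most 9 of them; hence [F1], [F2] share a block [C], and the same count shows that
   every member of [F] contains [C].  Non-triviality provides [G0] in [G] avoiding [C];
   each member of [F] is then [{C, X, _}] with [X] a block of [G0], which leaves exactly
   [F = {{C, U, _}, {C, V, _}}] with [G0 = {U, V, _}].  Now [2 ^ (n - 2) <= |G| <= |star C| + 9]
   forces [|C| = 1], maximality puts the whole star of [C] into [G], and [G0] is the only
   member of [G] avoiding [C]. *)

Set Implicit Arguments.
Unset Strict Implicit.
Unset Printing Implicit Defensive.

Lemma disjoint_neq (T : finType) (X Y : {set T}) : X != set0 -> [disjoint X & Y] -> X != Y.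
Proof. move=> X0; apply: contraTneq => <-; rewrite -setI_eq0 setIid; exact: X0. Qed.

Lemma setCU_neq0 (T : finType) (X Y Z : {set T}) :
  Z != set0 -> [disjoint X & Z] -> [disjoint Y & Z] -> ~: (X :|: Y) != set0.
Proof.
move=> /set0Pn [z zZ] dXZ dYZ; apply/set0Pn; exists z.
by rewrite !inE (disjointFl dXZ zZ) (disjointFl dYZ zZ).
Qed.

Lemma cover_set3 (T : finType) (A B D : {set T}) : cover [set A; B; D] = A :|: B :|: D.
Proof. by rewrite /cover !bigcup_setU !big_set1. Qed.

Lemma card_properset (T : finType) (D : {set T}) : #|powerset D :\ D| = 2 ^ #|D| - 1.
Proof.
by move: (cardsD1 D (powerset D)); rewrite powersetE subxx card_powerset /=; lia.
Qed.

Lemma card_imset2_le (T1 T2 T3 : finType) (f : T1 -> T2 -> T3) (A : {set T1}) (B : {set T2}) :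
  #|f @2: (A, B)| <= #|A| * #|B|.
Proof. by rewrite curry_imset2X -cardsX leq_imset_card. Qed.

Lemma pow2_blocks_lt N x y z : 0 < x -> 0 < y -> 0 < z -> x + y + z = N ->
  (2 ^ (N - x - 1) - 1) + (2 ^ (N - y - 1) - 1) + (2 ^ (N - z - 1) - 1) < 2 ^ (N - 1).
Proof.
case: x => // a; case: y => // b; case: z => // c _ _ _ <-.
have -> : a.+1 + b.+1 + c.+1 - a.+1 - 1 = b + c + 1 by lia.
have -> : a.+1 + b.+1 + c.+1 - b.+1 - 1 = a + c + 1 by lia.
have -> : a.+1 + b.+1 + c.+1 - c.+1 - 1 = a + b + 1 by lia.
have -> : a.+1 + b.+1 + c.+1 - 1 = a + b + c + 2 by lia.
rewrite !expnD !expn1 (_ : 2 ^ 2 = 4) //.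
move: (expn_gt0 2 a) (expn_gt0 2 b) (expn_gt0 2 c).
move: (2 ^ a) (2 ^ b) (2 ^ c) => [|p] // [|q] // [|r] // _ _ _; nia.
Qed.

Lemma pow2_pivot_card n k : 16 <= n -> 0 < k -> 2 ^ (n - 2) <= 2 ^ (n - k - 1) - 1 + 9 -> k = 1.
Proof.
move=> n16 k0 le_pow; apply/eqP; rewrite eqn_leq k0 andbT leqNgt; apply/negP => lt1k.
have p3 : 2 ^ (n - k - 1) <= 2 ^ (n - 3) by rewrite leq_exp2l //; lia.
have p2 : 2 ^ (n - 2) = 2 * 2 ^ (n - 3) by rewrite -expnS; congr (2 ^ _); lia.
have p16 : 2 ^ 4 <= 2 ^ (n - 3) by rewrite leq_exp2l //; lia.
move: le_pow p3 p16; rewrite p2; move: (2 ^ (n - 3)) (2 ^ (n - k - 1)) => p q; lia.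
Qed.

Section ThreePartitions.
Variable n : nat.
Implicit Types (X Y C : {set 'I_n}) (P : {set {set 'I_n}}).

Definition part3 X Y : {set {set 'I_n}} := [set X; Y; ~: (X :|: Y)].

Lemma Pi3P P : P \in Pi n 3 ->
  [/\ cover P = setT, trivIset P, set0 \notin P & #|P| = 3].
Proof. by rewrite inE => /andP [/and3P [/eqP -> -> ->] /eqP ->]. Qed.

Lemma Pi3_disjoint P X Y : P \in Pi n 3 -> X \in P -> Y \in P -> X != Y ->
  [disjoint X & Y].
Proof. by case/Pi3P=> _ /trivIsetP h _ _; apply: h. Qed.

Lemma Pi3_neq0 P X : P \in Pi n 3 -> X \in P -> X != set0.
Proof. by case/Pi3P=> _ _ P0 _ XP; apply: contraNneq P0 => <-. Qed.

Lemma Pi3_pblock P x : P \in Pi n 3 -> pblock P x \in P /\ x \in pblock P x.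
Proof.
case/Pi3P=> coverP _ _ _; have xP : x \in cover P by rewrite coverP inE.
by rewrite pblock_mem // mem_pblock.
Qed.

Lemma in_part3 X Y B : (B \in part3 X Y) = [|| B == X, B == Y | B == ~: (X :|: Y)].
Proof. by rewrite !inE orbA. Qed.

Lemma part3_mem1 X Y : X \in part3 X Y. Proof. by rewrite in_part3 eqxx. Qed.
Lemma part3_mem2 X Y : Y \in part3 X Y. Proof. by rewrite in_part3 eqxx orbT. Qed.
Lemma part3_mem3 X Y : ~: (X :|: Y) \in part3 X Y.
Proof. by rewrite in_part3 eqxx !orbT. Qed.

Lemma Pi3_eq_part3 P X Y : P \in Pi n 3 -> X \in P -> Y \in P -> X != Y ->
  P = part3 X Y.
Proof.
move=> PP XP YP XY; have [_ _ _ card3] := Pi3P PP.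
have YPX : Y \in P :\ X by rewrite !inE YP eq_sym XY.
have : #|P :\ X :\ Y| == 1.
  move: (cardsD1 X P) (cardsD1 Y (P :\ X)); rewrite XP YPX card3 /= !add1n.
  by move=> -[<-] -[<-].
case/cards1P=> Z PXY; have : Z \in P :\ X :\ Y by rewrite PXY set11.
rewrite !inE => /and3P [ZY ZX ZP].
have third B : B \in P -> B != X -> B != Y -> B = Z.
  by move=> BP BX BY; apply/set1P; rewrite -PXY !inE BX BY.
have eZ : Z = ~: (X :|: Y).
  apply/setP=> x; rewrite !inE; have [BP xB] := Pi3_pblock x PP.
  have [eX|BX] := eqVneq (pblock P x) X.
    by rewrite -eX xB (disjointFr (Pi3_disjoint PP BP ZP _)) // eX eq_sym.
  have [eY|BY] := eqVneq (pblock P x) Y.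
    by rewrite -eY xB orbT (disjointFr (Pi3_disjoint PP BP ZP _)) // eY eq_sym.
  rewrite -(third _ BP BX BY) xB.
  by rewrite (disjointFl (Pi3_disjoint PP XP BP _)) ?(disjointFl (Pi3_disjoint PP YP BP _))
    // eq_sym.
apply/setP=> B; rewrite in_part3 -eZ; apply/idP/idP.
  move=> BP; have [->|BX] := eqVneq B X; first by [].
  by have [->|BY] := eqVneq B Y; rewrite ?orbT // (third B BP BX BY) eqxx !orbT.
by case/or3P=> /eqP ->.
Qed.

Lemma part3_Pi3 X Y : X != set0 -> Y != set0 -> [disjoint X & Y] ->
  ~: (X :|: Y) != set0 -> part3 X Y \in Pi n 3.
Proof.
move=> X0 Y0 dXY Z0.
have dXZ : [disjoint X & ~: (X :|: Y)] by rewrite disjoints_subset setCK subsetUl.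
have dYZ : [disjoint Y & ~: (X :|: Y)] by rewrite disjoints_subset setCK subsetUr.
rewrite inE /partition; apply/andP; split; first (apply/and3P; split).
- apply/eqP/setP=> x; rewrite inE; apply/bigcupP.
  have [xXY|xXY] := boolP (x \in X :|: Y).
    case/setUP: xXY => xB; [exists X | exists Y] => //.
    - exact: part3_mem1.
    - exact: part3_mem2.
  by exists (~: (X :|: Y)); [exact: part3_mem3 | rewrite inE].
- apply/trivIsetP=> A B; rewrite !in_part3.
  by do 2!case/or3P=> /eqP ->; rewrite ?eqxx // => _; rewrite 1?disjoint_sym.
- by rewrite in_part3 !negb_or !(eq_sym set0) X0 Y0 Z0.
- rewrite /part3 -setUA cardsU1 cards2 !inE negb_or (disjoint_neq X0 dXY).
  by rewrite (disjoint_neq X0 dXZ) (disjoint_neq Y0 dYZ).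
Qed.

Lemma Pi3_card_blocks P X Y : P \in Pi n 3 -> X \in P -> Y \in P -> X != Y ->
  #|X| + #|Y| + #|~: (X :|: Y)| = n.
Proof.
move=> PP XP YP XY; have := cardsC (X :|: Y).
by rewrite card_ord cardsU (disjoint_setI0 (Pi3_disjoint PP XP YP XY)) cards0 subn0.
Qed.

Lemma meetP (F G : {set {set 'I_n}}) :
  reflect (exists2 B, B \in F & B \in G) (0 < #|F :&: G|).
Proof.
rewrite card_gt0; apply: (iffP (set0Pn _)) => [[B] | [B BF BG]].
  by rewrite inE => /andP [BF BG]; exists B.
by exists B; rewrite inE BF BG.
Qed.

Definition star C : {set {set {set 'I_n}}} := [set P in Pi n 3 | C \in P].

Lemma starP C P : reflect (P \in Pi n 3 /\ C \in P) (P \in star C).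
Proof. exact: setIdP. Qed.

(* A member of [star C] is recovered from the proper subset [B :\ x0] of [~: C :\ x0],
   where [B] is its block containing a fixed point [x0] outside [C]. *)
Lemma card_star_le C x0 : x0 \notin C -> #|star C| <= 2 ^ (n - #|C| - 1) - 1.
Proof.
move=> x0C.
have cardD : #|~: C :\ x0| = n - #|C| - 1.
  by move: (cardsD1 x0 (~: C)) (cardsC C); rewrite inE x0C card_ord /=; lia.
set D := ~: C :\ x0.
rewrite -cardD -card_properset.
pose g P := pblock P x0 :\ x0.
have shape P : P \in star C -> let B := pblock P x0 in
    [/\ P \in Pi n 3, [disjoint C & B], P = part3 C B & B = x0 |: g P].
  case/starP=> PP CP /=; have [BP xB] := Pi3_pblock x0 PP.
  have CB : C != pblock P x0 by apply: contraNneq x0C => ->.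
  rewrite (setD1K xB); split=> //; first exact: Pi3_disjoint PP CP BP CB.
  exact: Pi3_eq_part3.
rewrite -(card_in_imset (f := g)); last first.
  move=> P1 P2 /shape [_ _ eP1 eB1] /shape [_ _ eP2 eB2] eg.
  by rewrite eP1 eP2 eB1 eB2 eg.
apply/subset_leq_card/subsetP => _ /imsetP [P /shape [PP dCB eP eB] ->].
rewrite in_setD1 powersetE; apply/andP; split.
  have := part3_mem3 C (pblock P x0); rewrite -eP => /(Pi3_neq0 PP).
  apply: contra => /eqP gD; apply/eqP/setP => y; rewrite eB gD /D !inE.
  by case: (y \in C); case: (y == x0).
apply/subsetP => y; rewrite /g /D !inE => /andP [-> yB].
by rewrite (disjointFl dCB yB).
Qed.

Lemma card_star1_ge x0 x1 : x0 != x1 -> 2 ^ (n - 2) - 1 <= #|star [set x0]|.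
Proof.
move=> x01.
have cardD : #|~: [set x0; x1]| = n - 2.
  by move: (cardsC [set x0; x1]); rewrite card_ord cards2 x01 /=; lia.
set D := ~: [set x0; x1].
rewrite -cardD -card_properset.
pose h S := part3 [set x0] (x1 |: S).
have memD S : S \in powerset D :\ D -> (x0 \notin S) && (x1 \notin S).
  rewrite in_setD1 powersetE => /andP [_ /subsetP sD].
  by apply/andP; split; apply/negP => /sD; rewrite !inE eqxx ?orbT.
rewrite -(card_in_imset (f := h)); last first.
  move=> S1 S2 /memD /andP [_ x1S1] /memD /andP [_ x1S2] eh.
  have : x1 |: S1 \in h S2 by rewrite -eh part3_mem2.
  rewrite in_part3 => /or3P [] /eqP e.
  - by move/setP: e => /(_ x1); rewrite !inE eqxx eq_sym (negbTE x01).
  - by rewrite -(setU1K x1S1) e setU1K.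
  - by move/setP: e => /(_ x1); rewrite !inE !eqxx !orbT.
apply/subset_leq_card/subsetP => _ /imsetP [S SD ->].
have /andP [x0S x1S] := memD S SD.
apply/starP; split; last exact: part3_mem1.
apply: part3_Pi3.
- by apply/set0Pn; exists x0; rewrite inE.
- by apply/set0Pn; exists x1; rewrite !inE eqxx.
- by rewrite disjoints1 !inE negb_or x01.
- move: SD; rewrite in_setD1 powersetE => /andP [nSD sSD].
  have /subsetPn [y yD yS] : ~~ (D \subset S).
    by apply: contra nSD => DS; rewrite eqEsubset DS sSD.
  apply/set0Pn; exists y; move: yD; rewrite /D !inE !negb_or => /andP [-> ->].
  by rewrite yS.
Qed.

(* Every partition meeting [P] lies in the star of one of its three blocks. *)
Lemma card_meet_Pi3_lt P (calG : {set {set {set 'I_n}}}) :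
  P \in Pi n 3 -> calG \subset Pi n 3 ->
  (forall G, G \in calG -> 0 < #|P :&: G|) -> #|calG| < 2 ^ (n - 1).
Proof.
move=> PP sGPi meetG; have [_ _ _ card3] := Pi3P PP.
have /card_gt1P [X [Y [XP YP XY]]] : 1 < #|P| by rewrite card3.
have eP := Pi3_eq_part3 PP XP YP XY; have dXY := Pi3_disjoint PP XP YP XY.
have ZP : ~: (X :|: Y) \in P by rewrite eP part3_mem3.
have [x xX] := set0Pn _ (Pi3_neq0 PP XP); have [y yY] := set0Pn _ (Pi3_neq0 PP YP).
have sub : calG \subset star X :|: star Y :|: star (~: (X :|: Y)).
  apply/subsetP => G GcalG; have [B BP BG] := meetP _ _ (meetG G GcalG).
  have GP : G \in Pi n 3 by apply: (subsetP sGPi).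
  have GB : G \in star B by apply/starP.
  by move: BP; rewrite eP in_part3 => /or3P [] /eqP eB; rewrite !in_setU -eB GB ?orbT.
apply: leq_ltn_trans (subset_leq_card sub) _.
apply: leq_ltn_trans (leq_card_setU _ _) _.
apply: leq_ltn_trans (leq_add (leq_card_setU _ _) (leqnn _)) _.
have xZ : x \notin ~: (X :|: Y) by rewrite !inE xX.
apply: leq_ltn_trans (leq_add (leq_add (card_star_le (negbT (disjointFl dXY yY)))
  (card_star_le (negbT (disjointFr dXY xX)))) (card_star_le xZ)) _.
by apply: pow2_blocks_lt; rewrite ?card_gt0 ?(Pi3_neq0 PP) // (Pi3_card_blocks PP XP YP XY).
Qed.

Lemma Pi3_common_block_eq P Q C B : P \in Pi n 3 -> Q \in Pi n 3 -> P != Q ->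
  C \in P -> C \in Q -> B \in P -> B \in Q -> B = C.
Proof.
move=> PP QP PQ CP CQ BP BQ; apply/eqP; apply: contraNT PQ => BC.
by rewrite (Pi3_eq_part3 PP BP CP BC) (Pi3_eq_part3 QP BQ CQ BC).
Qed.

Lemma card_part3_pairs_le P Q : P \in Pi n 3 -> Q \in Pi n 3 -> #|part3 @2: (P, Q)| <= 9.
Proof.
move=> /Pi3P [_ _ _ cardP] /Pi3P [_ _ _ cardQ].
by apply: leq_trans (card_imset2_le _ _ _) _; rewrite cardP cardQ.
Qed.

End ThreePartitions.

Arguments part3 {n}.

Section Pivot.
Variables (n : nat) (C U V : {set 'I_n}).
Hypotheses (C0 : C != set0) (U0 : U != set0) (V0 : V != set0).
Hypotheses (dCU : [disjoint C & U]) (dCV : [disjoint C & V]) (dUV : [disjoint U & V]).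
Hypothesis W0 : ~: (C :|: U :|: V) != set0.

Let CU : C != U := disjoint_neq C0 dCU.
Let CV : C != V := disjoint_neq C0 dCV.
Let UV : U != V := disjoint_neq U0 dUV.

Lemma pivot_partial_partition : is_partial_partition [set C; U; V].
Proof.
apply/andP; split; last by rewrite !inE !negb_or !(eq_sym set0) C0 U0 V0.
apply/trivIsetP => X Y; rewrite !inE -!orbA.
by do 2!case/or3P=> /eqP ->; rewrite ?eqxx // => _; rewrite 1?disjoint_sym.
Qed.

Lemma card_pivot : #|[set C; U; V]| = 3.
Proof. by rewrite -setUA cardsU1 cards2 !inE negb_or CU CV UV. Qed.

Lemma card_cover_pivot_lt : #|cover [set C; U; V]| < n.
Proof.
have : C :|: U :|: V \proper setT.
  by rewrite properT; apply: contraNneq W0 => ->; rewrite setCT.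
by rewrite cover_set3 => /proper_card; rewrite cardsT card_ord.
Qed.

Lemma part3_CU_Pi3 : part3 C U \in Pi n 3.
Proof. by apply: part3_Pi3 => //; apply: setCU_neq0 V0 _ _. Qed.

Lemma part3_CV_Pi3 : part3 C V \in Pi n 3.
Proof. by apply: part3_Pi3 => //; apply: setCU_neq0 U0 _ _; rewrite // disjoint_sym. Qed.

Lemma part3_UV_Pi3 : part3 U V \in Pi n 3.
Proof. by apply: part3_Pi3 => //; apply: setCU_neq0 C0 _ _; rewrite disjoint_sym. Qed.

Lemma C_notin_part3_UV : C \notin part3 U V.
Proof.
rewrite in_part3 (negbTE CU) (negbTE CV) /=; apply: contraNneq W0 => ->.
by rewrite -setUA setUC setUCr setCT.
Qed.

Lemma U_notin_part3_CV : U \notin part3 C V.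
Proof.
rewrite in_part3 eq_sym (negbTE CU) (negbTE UV) /=; apply: contraNneq W0 => eU.
by rewrite (setUC C) -setUA eU setUC setUCr setCT.
Qed.

Let pivot_setD1 : [set C; U; V] :\ C = [set U; V].
Proof. by rewrite -setUA setU1K // !inE negb_or CU CV. Qed.

Lemma calA_pivot : calA 3 [set C] [set C; U; V] = [set part3 C U; part3 C V].
Proof.
apply/setP => F; rewrite /calA in_set pivot_setD1 sub1set; apply/idP/idP.
  case/and3P => FP CF /set0Pn [B]; rewrite in_setI in_set2.
  by case/andP => BF /orP [] /eqP eB; subst B;
    rewrite (Pi3_eq_part3 FP CF BF) ?set21 ?set22.
case/set2P => ->; rewrite ?part3_CU_Pi3 ?part3_CV_Pi3 part3_mem1 /=; apply/set0Pn.
- by exists U; rewrite in_setI part3_mem2 set21.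
- by exists V; rewrite in_setI part3_mem2 set22.
Qed.

Lemma calB_pivot : calB 3 [set C] [set C; U; V] = star C :|: [set part3 U V].
Proof.
rewrite /calB imset_set1 pivot_setD1 cover_set3; congr (_ :|: [set _ :|: [set _]]).
  by apply: eq_finset => F; rewrite sub1set.
apply/setP => x; rewrite !inE; case: (boolP (x \in C)) => //= xC.
by rewrite (disjointFr dCU xC) (disjointFr dCV xC).
Qed.

Lemma pivot_cross : cross1 [set part3 C U; part3 C V] (star C :|: [set part3 U V]).
Proof.
move=> F G /set2P [] -> /setUP [/starP [_ CG] | /set1P ->]; apply/meetP.
- by exists C; first exact: part3_mem1.
- by exists U; [exact: part3_mem2 | exact: part3_mem1].
- by exists C; first exact: part3_mem1.
- by exists V; exact: part3_mem2.
Qed.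

Lemma pivot_nontrivial : nontrivial [set part3 C U; part3 C V] (star C :|: [set part3 U V]).
Proof.
case=> B memB.
have BCU : B \in part3 C U by apply: memB; rewrite in_setU set21.
have BCV : B \in part3 C V by apply: memB; rewrite in_setU set22.
have BUV : B \in part3 U V by apply: memB; rewrite !in_setU set11 !orbT.
have eB : B = ~: (C :|: U).
  move: BCU; rewrite in_part3 => /or3P [] /eqP // eB.
  - by move: C_notin_part3_UV; rewrite -eB BUV.
  - by move: (U_notin_part3_CV); rewrite -eB BCV.
have [b bW] := set0Pn _ W0.
rewrite !inE !negb_or in bW; case/andP: bW => /andP [bC bU] bV.
have [c cC] := set0Pn _ C0.
move: BUV; rewrite in_part3 eB => /or3P [] /eqP /setP e.
- by move: (e b); rewrite !inE (negbTE bC) (negbTE bU).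
- by move: (e b); rewrite !inE (negbTE bC) (negbTE bU) (negbTE bV).
- by move: (e c); rewrite !inE cC (disjointFr dCU cC) (disjointFr dCV cC).
Qed.

Lemma part3_pivot_neq : part3 C U != part3 C V.
Proof. by apply: contraNneq U_notin_part3_CV => <-; exact: part3_mem2. Qed.

Lemma card_pivot_calA : #|[set part3 C U; part3 C V]| = 2.
Proof. by rewrite cards2 part3_pivot_neq. Qed.

Lemma card_pivot_calB : #|star C :|: [set part3 U V]| = (#|star C|).+1.
Proof.
rewrite setUC cardsU1; suff -> : part3 U V \notin star C by [].
by apply: contra C_notin_part3_UV => /starP [].
Qed.

Lemma pivot_blocks_eq X Y : X \in part3 C U -> Y \in part3 C V -> X != C -> Y != C ->
  [disjoint X & Y] -> X = U /\ Y = V.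
Proof.
have [b bW] := set0Pn _ W0.
rewrite !inE !negb_or in bW; case/andP: bW => /andP [bC bU] bV.
have [u uU] := set0Pn _ U0; have [v vV] := set0Pn _ V0.
rewrite !in_part3 => /or3P [] /eqP -> /or3P [] /eqP -> //; rewrite ?eqxx // => _ _ dXY.
- have := disjointFr dXY uU.
  by rewrite !inE (disjointFl dCU uU) (disjointFr dUV uU).
- have := disjointFl dXY vV.
  by rewrite !inE (disjointFl dCV vV) (disjointFl dUV vV).
- have := disjointFr dXY (x := b).
  by rewrite !inE (negbTE bC) (negbTE bU) (negbTE bV) => /(_ isT).
Qed.

End Pivot.

Lemma nontrivialS n (calF calG calF' calG' : {set {set {set 'I_n}}}) :
  calF \subset calF' -> calG \subset calG' -> nontrivial calF calG -> nontrivial calF' calG'.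
Proof.
move=> sF sG ntFG [B memB]; apply: ntFG; exists B => P PFG; apply: memB.
by move: PFG; rewrite !in_setU => /orP [/(subsetP sF) | /(subsetP sG)] ->; rewrite ?orbT.
Qed.

Lemma exists_large_cross_pair n : 4 <= n -> exists calF calG : {set {set {set 'I_n}}},
  [/\ calF \subset Pi n 3, calG \subset Pi n 3, cross1 calF calG, nontrivial calF calG &
      2 ^ (n - 1) <= #|calF| * #|calG|].
Proof.
move=> n4; pose x i (lt_i4 : i < 4) : 'I_n := Ordinal (leq_trans lt_i4 n4).
pose C := [set x 0 isT]; pose U := [set x 1 isT]; pose V := [set x 2 isT].
have C0 : C != set0 by apply/set0Pn; exists (x 0 isT); rewrite inE.
have U0 : U != set0 by apply/set0Pn; exists (x 1 isT); rewrite inE.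
have V0 : V != set0 by apply/set0Pn; exists (x 2 isT); rewrite inE.
have dCU : [disjoint C & U] by rewrite disjoints1 inE.
have dCV : [disjoint C & V] by rewrite disjoints1 inE.
have dUV : [disjoint U & V] by rewrite disjoints1 inE.
have W0 : ~: (C :|: U :|: V) != set0 by apply/set0Pn; exists (x 3 isT); rewrite !inE.
exists [set part3 C U; part3 C V], (star C :|: [set part3 U V]); split.
- apply/subsetP => F /set2P [] ->.
  + exact: (part3_CU_Pi3 (V := V)).
  + exact: (part3_CV_Pi3 (U := U)).
- apply/subsetP => G /setUP [/starP [] // | /set1P ->]; exact: (part3_UV_Pi3 (C := C)).
- exact: pivot_cross.
- exact: pivot_nontrivial.
rewrite card_pivot_calA // card_pivot_calB //.
have := card_star1_ge (isT : x 0 isT != x 1 isT).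
have -> : n - 1 = (n - 2).+1 by lia.
rewrite -/C expnS leq_mul2l /=; move: (expn_gt0 2 (n - 2)); lia.
Qed.

Section RealBound.
Local Open Scope R_scope.

Lemma Lkt31_ge16 n : 2 * Lkt 3 1 <= INR n -> (16 <= n)%N.
Proof.
have -> : Lkt 3 1 = 2 + 3 * (ln (2 * 3) / ln 2).
  by rewrite /Lkt /=; congr (_ + _ * (ln _ / ln _)); ring.
move=> le_n; apply/leP/INR_le.
have ln2_pos : 0 < ln 2 by have := ln_lt_2; lra.
have ln2_lt_ln3 : ln 2 < ln 3 by apply: ln_increasing; lra.
have ln6 : ln (2 * 3) = ln 2 + ln 3 by apply: ln_mult; lra.
have log6_ge2 : 2 <= ln (2 * 3) / ln 2.
  have : ln (2 * 3) / ln 2 * ln 2 = ln (2 * 3) by field; lra.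
  nra.
rewrite (_ : INR 16 = 16); first lra.
by simpl; ring.
Qed.

End RealBound.

Section CrossFamilies.
Variables (n : nat) (calF calG : {set {set {set 'I_n}}}).
Hypotheses (sFPi : calF \subset Pi n 3) (sGPi : calG \subset Pi n 3).
Hypothesis crossFG : cross1 calF calG.

Lemma cross_meet F G : F \in calF -> G \in calG -> exists2 B, B \in F & B \in G.
Proof. by move=> FF GG; apply/meetP/crossFG. Qed.

Lemma cross_distinct_blocks F1 F2 G : F1 \in calF -> F2 \in calF -> G \in calG ->
  (forall B, B \in F1 -> B \in F2 -> B \notin G) ->
  exists X Y, [/\ X \in F1, Y \in F2, X \in G, Y \in G & X != Y].
Proof.
move=> F1F F2F GG noB.
have [X XF1 XG] := cross_meet F1F GG; have [Y YF2 YG] := cross_meet F2F GG.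
by exists X, Y; split => //; apply: contraTneq XG => eXY; apply: noB; rewrite // eXY.
Qed.

Lemma cross_part3_pairs F1 F2 G : F1 \in calF -> F2 \in calF -> G \in calG ->
  (forall B, B \in F1 -> B \in F2 -> B \notin G) -> G \in part3 @2: (F1, F2).
Proof.
move=> F1F F2F GG /(cross_distinct_blocks F1F F2F GG) [X [Y [XF1 YF2 XG YG XY]]].
apply/imset2P; exists X Y => //; apply: Pi3_eq_part3 XG YG XY.
exact: (subsetP sGPi).
Qed.

Lemma card_cross_disjoint_le F1 F2 : F1 \in calF -> F2 \in calF -> F1 :&: F2 = set0 ->
  #|calG| <= 9.
Proof.
move=> F1F F2F F12; apply: leq_trans (card_part3_pairs_le (subsetP sFPi _ F1F)
  (subsetP sFPi _ F2F)); apply/subset_leq_card/subsetP => G GG.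
apply: cross_part3_pairs => // B BF1 BF2.
by move/setP: F12 => /(_ B); rewrite !inE BF1 BF2.
Qed.

Section CommonBlock.
Variables (F1 F2 : {set {set 'I_n}}) (C : {set 'I_n}).
Hypotheses (F1F : F1 \in calF) (F2F : F2 \in calF) (F12 : F1 != F2).
Hypotheses (CF1 : C \in F1) (CF2 : C \in F2).

Let common_notin (G : {set {set 'I_n}}) :
  C \notin G -> forall B, B \in F1 -> B \in F2 -> B \notin G.
Proof.
move=> CG B BF1 BF2.
by rewrite (Pi3_common_block_eq (subsetP sFPi _ F1F) (subsetP sFPi _ F2F) F12 CF1 CF2 BF1 BF2).
Qed.

Lemma cross_off_pivot_blocks G : G \in calG -> C \notin G ->
  exists X Y, [/\ X \in F1, Y \in F2, X \in G, Y \in G & X != Y].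
Proof. by move=> GG /common_notin; apply: cross_distinct_blocks. Qed.

Let cross_off_pivot_mem G : G \in calG -> C \notin G -> G \in part3 @2: (F1, F2).
Proof. by move=> GG /common_notin; apply: cross_part3_pairs. Qed.

Let card_pairs_le : #|part3 @2: (F1, F2)| <= 9.
Proof. exact: card_part3_pairs_le (subsetP sFPi _ F1F) (subsetP sFPi _ F2F). Qed.

Lemma card_cross_pivot_le : #|calG| <= #|star C| + 9.
Proof.
have sub : calG \subset star C :|: part3 @2: (F1, F2).
  apply/subsetP => G GG; rewrite in_setU; case: (boolP (C \in G)) => CG.
    by apply/orP; left; apply/starP; split => //; apply: (subsetP sGPi).
  by rewrite cross_off_pivot_mem ?orbT.
apply: leq_trans (subset_leq_card sub) _.
exact: leq_trans (leq_card_setU _ _) (leq_add (leqnn _) card_pairs_le).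
Qed.

Lemma card_cross_pivot_off_le F3 : F3 \in calF -> C \notin F3 -> #|calG| <= 12.
Proof.
move=> F3F CF3; have F3P := subsetP sFPi _ F3F.
have sub : calG \subset [set part3 C D | D in F3] :|: part3 @2: (F1, F2).
  apply/subsetP => G GG; rewrite in_setU; case: (boolP (C \in G)) => CG; last first.
    by rewrite cross_off_pivot_mem ?orbT.
  have [D DF3 DG] := cross_meet F3F GG.
  have CD : C != D by apply: contraNneq CF3 => ->.
  have GP := subsetP sGPi _ GG.
  by rewrite (Pi3_eq_part3 GP CG DG CD) imset_f.
apply: leq_trans (subset_leq_card sub) _.
apply: leq_trans (leq_card_setU _ _) _; rewrite (_ : 12 = 3 + 9) //.
apply: leq_add card_pairs_le; have [_ _ _ <-] := Pi3P F3P; exact: leq_imset_card.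
Qed.

End CommonBlock.
End CrossFamilies.

Section Extremal.
Variables (n : nat) (calF calG : {set {set {set 'I_n}}}).
Hypothesis n16 : 16 <= n.
Hypotheses (sFPi : calF \subset Pi n 3) (sGPi : calG \subset Pi n 3).
Hypotheses (crossFG : cross1 calF calG) (ntFG : nontrivial calF calG).
Hypothesis maxFG : forall calF' calG' : {set {set {set 'I_n}}},
  calF' \subset Pi n 3 -> calG' \subset Pi n 3 -> cross1 calF' calG' -> nontrivial calF' calG' ->
  #|calF'| * #|calG'| <= #|calF| * #|calG|.
Hypothesis leFG : #|calF| <= #|calG|.

Lemma extremal_product_ge : 2 ^ (n - 1) <= #|calF| * #|calG|.
Proof.
have [F [G [sF sG crossFG' ntFG' ge]]] := exists_large_cross_pair (leq_trans (isT : 4 <= 16) n16).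
exact: leq_trans ge (maxFG sF sG crossFG' ntFG').
Qed.

Lemma extremal_calF_gt0 : 0 < #|calF|.
Proof.
rewrite lt0n; apply: contraTneq extremal_product_ge => ->.
by rewrite mul0n -ltnNge expn_gt0.
Qed.

Lemma extremal_calG_gt12 : 12 < #|calG|.
Proof.
rewrite ltnNge; apply/negP => le12.
have : 2 ^ 15 <= #|calF| * #|calG|.
  by apply: leq_trans extremal_product_ge; rewrite leq_exp2l //; lia.
by rewrite leqNgt (leq_ltn_trans (leq_mul (leq_trans leFG le12) le12)).
Qed.

Lemma extremal_two_members : exists F1 F2, [/\ F1 \in calF, F2 \in calF & F1 != F2].
Proof.
apply/card_gt1P; rewrite ltnNge; apply/negP => le1.
have /card_gt0P [P PF] := extremal_calF_gt0.
have := card_meet_Pi3_lt (subsetP sFPi _ PF) sGPi (fun G GG => crossFG PF GG).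
rewrite ltnNge => /negP; apply; apply: leq_trans extremal_product_ge _.
by rewrite -{2}(mul1n #|calG|) leq_mul2r le1 orbT.
Qed.

Lemma extremal_pivot : exists (C : {set 'I_n}) F1 F2,
  [/\ F1 \in calF, F2 \in calF, F1 != F2 & (forall F, F \in calF -> C \in F)].
Proof.
have [F1 [F2 [F1F F2F F12]]] := extremal_two_members.
have : F1 :&: F2 != set0.
  apply: contraTneq extremal_calG_gt12 => F12_0; rewrite -leqNgt.
  exact: leq_trans (card_cross_disjoint_le sFPi sGPi crossFG F1F F2F F12_0) _.
case/set0Pn => C; rewrite inE => /andP [CF1 CF2].
exists C, F1, F2; split => // F FF; apply: contraTT extremal_calG_gt12 => CF.
by rewrite -leqNgt (card_cross_pivot_off_le sFPi sGPi crossFG F1F F2F F12 CF1 CF2 FF CF).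
Qed.

Lemma extremal_star_sub (C : {set 'I_n}) : (forall F, F \in calF -> C \in F) -> star C \subset calG.
Proof.
move=> CF; set calG' := calG :|: star C.
have sG'Pi : calG' \subset Pi n 3 by rewrite subUset sGPi; apply/subsetP => P /starP [].
have cross' : cross1 calF calG'.
  move=> F G FF /setUP [GG | /starP [_ CG]]; first exact: crossFG.
  by apply/meetP; exists C; first exact: CF.
have nt' : nontrivial calF calG' := nontrivialS (subxx _) (subsetUl _ _) ntFG.
have := maxFG sFPi sG'Pi cross' nt'; rewrite leq_pmul2l ?extremal_calF_gt0 // => le'.
suff -> : calG = calG' by apply: subsetUr.
by apply/eqP; rewrite eqEcard subsetUl le'.
Qed.

Lemma extremal_shape : exists C U V : {set 'I_n},
  [/\ [/\ C != set0, U != set0 & V != set0],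
      [/\ [disjoint C & U], [disjoint C & V] & [disjoint U & V]],
      ~: (C :|: U :|: V) != set0,
      calF = [set part3 C U; part3 C V] & part3 U V \in calG].
Proof.
have [C [F1 [F2 [F1F F2F F12 CF]]]] := extremal_pivot.
have [G0 G0G CG0] : exists2 G0, G0 \in calG & C \notin G0.
  apply/exists_inP; apply: contraT => /exists_inPn noG; case: ntFG; exists C => P.
  by case/setUP => [/CF // | /noG]; rewrite negbK.
have FPi := subsetP sFPi; have G0P := subsetP sGPi _ G0G.
have neqC X : X \in G0 -> C != X by move=> XG0; apply: contraNneq CG0 => ->.
have shapeF F : F \in calF -> exists2 X, X \in G0 & X \in F /\ F = part3 C X.
  move=> FF; have [X XF XG0] := cross_meet crossFG FF G0G.
  by exists X => //; split => //; apply: Pi3_eq_part3 (FPi _ FF) (CF _ FF) XF (neqC _ XG0).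
have [U UG0 [UF1 eF1]] := shapeF _ F1F; have [V VG0 [VF2 eF2]] := shapeF _ F2F.
have UV : U != V by apply: contraNneq F12 => eUV; rewrite eF1 eF2 eUV.
have dCU := Pi3_disjoint (FPi _ F1F) (CF _ F1F) UF1 (neqC _ UG0).
have dCV := Pi3_disjoint (FPi _ F2F) (CF _ F2F) VF2 (neqC _ VG0).
have eG0 := Pi3_eq_part3 G0P UG0 VG0 UV.
have C0 := Pi3_neq0 (FPi _ F1F) (CF _ F1F); have [c cC] := set0Pn _ C0.
have W0 : ~: (C :|: U :|: V) != set0.
  have CW : C != ~: (U :|: V) by apply: neqC; rewrite eG0 part3_mem3.
  apply: contraNneq CW => /setP W_0; apply/eqP/setP => x; move: (W_0 x); rewrite !inE.
  case: (boolP (x \in C)) => xC /=; last by move=> ->.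
  by rewrite (disjointFr dCU xC) (disjointFr dCV xC).
exists C, U, V; split; rewrite -?eG0 //.
- by split; [| apply: Pi3_neq0 G0P UG0 | apply: Pi3_neq0 G0P VG0].
- by split => //; apply: Pi3_disjoint G0P UG0 VG0 UV.
(* A third member [part3 C W] with [W := ~: (U :|: V)] is impossible, as [C] lies inside [W]. *)
apply/setP => F; apply/idP/set2P => [FF | [] ->]; rewrite -?eF1 -?eF2 //.
have [X XG0 [XF eF]] := shapeF _ FF; have dCX := Pi3_disjoint (FPi _ FF) (CF _ FF) XF (neqC _ XG0).
move: XG0; rewrite eF eG0 in_part3 => /or3P [] /eqP eX; [left | right | exfalso]; rewrite ?eX //.
by move: (disjointFr dCX cC); rewrite eX !inE (disjointFr dCU cC) (disjointFr dCV cC).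
Qed.

Section ExtremalPivot.
Variables C U V : {set 'I_n}.
Hypotheses (C0 : C != set0) (U0 : U != set0) (V0 : V != set0).
Hypotheses (dCU : [disjoint C & U]) (dCV : [disjoint C & V]) (dUV : [disjoint U & V]).
Hypothesis W0 : ~: (C :|: U :|: V) != set0.
Hypotheses (eF : calF = [set part3 C U; part3 C V]) (UVG : part3 U V \in calG).

Let F1F : part3 C U \in calF. Proof. by rewrite eF set21. Qed.
Let F2F : part3 C V \in calF. Proof. by rewrite eF set22. Qed.
Let CF (F : {set {set 'I_n}}) : F \in calF -> C \in F.
Proof. by rewrite eF => /set2P [] ->; exact: part3_mem1. Qed.

(* [calG] has at least [2 ^ (n - 2)] members, but at most [|star C| + 9]. *)
Lemma extremal_pivot_card1 : #|C| = 1.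
Proof.
have CF1 := CF F1F; have CF2 := CF F2F.
have F12 : part3 C U != part3 C V by apply: part3_pivot_neq.
have [u uU] := set0Pn _ U0.
apply: (pow2_pivot_card n16); first by rewrite card_gt0.
apply: leq_trans (leq_trans (card_cross_pivot_le sFPi sGPi crossFG F1F F2F F12 CF1 CF2) _).
  have := extremal_product_ge; rewrite eF card_pivot_calA // -subnSK; last exact: leq_trans n16.
  by rewrite expnS leq_mul2l.
by rewrite leq_add2r (card_star_le (negbT (disjointFl dCU uU))).
Qed.

Lemma extremal_calG : calG = star C :|: [set part3 U V].
Proof.
have starG : star C \subset calG by apply: extremal_star_sub.
apply/eqP; rewrite eqEsubset subUset sub1set UVG starG /= andbT.
apply/subsetP => G GG; rewrite in_setU in_set1; have GP := subsetP sGPi _ GG.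
case: (boolP (C \in G)) => CG; first by apply/orP; left; apply/starP.
have F12 : part3 C U != part3 C V by apply: part3_pivot_neq.
have [X [Y [XF1 YF2 XG YG XY]]] :=
  cross_off_pivot_blocks sFPi crossFG F1F F2F F12 (CF F1F) (CF F2F) GG CG.
have XC : X != C by apply: contraNneq CG => <-.
have YC : Y != C by apply: contraNneq CG => <-.
have dXY := Pi3_disjoint GP XG YG XY.
have [eX eY] : X = U /\ Y = V by apply: (pivot_blocks_eq (C := C)).
by rewrite (Pi3_eq_part3 GP XG YG XY) eX eY eqxx orbT.
Qed.

End ExtremalPivot.
End Extremal.

Theorem mainTheorem7 (n : nat)
  (hn : Rle (Rmult (INR 2) (Lkt 3 1)) (INR n))
  (calF calG : {set {set {set 'I_n}}})
  (hF : calF \subset Pi n 3) (hG : calG \subset Pi n 3)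
  (hcross : cross1 calF calG) (hnt : nontrivial calF calG)
  (hmax : forall calF' calG' : {set {set {set 'I_n}}},
      calF' \subset Pi n 3 -> calG' \subset Pi n 3 ->
      cross1 calF' calG' -> nontrivial calF' calG' ->
      #|calF'| * #|calG'| <= #|calF| * #|calG|)
  (hle : #|calF| <= #|calG|) :
  exists (A : {set 'I_n}) (M : {set {set 'I_n}}),
    #|A| = 1 /\ is_partial_partition M /\ #|M| = 3 /\ A \in M /\
    #|cover M| < n /\
    calF = calA 3 [set A] M /\ calG = calB 3 [set A] M.
Proof.
have n16 := Lkt31_ge16 hn.
have [C [U [V [[C0 U0 V0] [dCU dCV dUV] W0 eF UVG]]]] :=
  extremal_shape n16 hF hG hcross hnt hmax hle.
have card1 := extremal_pivot_card1 n16 hF hG hcross hmax C0 U0 dCU dUV W0 eF.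
have eG := extremal_calG n16 hF hG hcross hnt hmax C0 U0 V0 dCU dCV dUV W0 eF UVG.
exists C, [set C; U; V]; rewrite calA_pivot ?calB_pivot //.
split; first exact: card1.
split; first exact: pivot_partial_partition.
split; first exact: card_pivot.
split; first by rewrite !inE eqxx.
by split; first exact: card_cover_pivot_lt.
Qed.
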